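(* Let $S$ be a monoid whose unique maximal right ideal $\mathfrak{M}$ is two-sided, and let $A$ be a right $S$-act with a maximal subact $B$. Suppose $AI=A$ for some proper right ideal $I$ of $S$. Then for every $a\in A\setminus B$ there exists $m\in\mathfrak{M}$ with $am=a$.
   Context: $S$ is a monoid with identity $1$ having at least one right non-invertible element. A (right) $S$-act is a nonempty set with an action $(a,s)\mapsto as$, $a1=a$, $a(st)=(as)t$. A subact is a nonempty subset closed under the action; a maximal subact is a proper subact not properly contained in another proper subact. $\mathfrak{M}=\{s\in S\mid st\neq1\ \forall t\in S\}$ is the unique maximal right ideal of $S$. $AI=\{as\mid a\in A, s\in I\}$. *)

Record is_monoid (S : Type) (mul : S -> S -> S) (one : S) : Prop := {
  mon_assoc : forall x y z, mul x (mul y z) = mul (mul x y) z;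
  mon_left_id : forall x, mul one x = x;
  mon_right_id : forall x, mul x one = x
}.

Definition right_invertible {S : Type} (mul : S -> S -> S) (one : S) (s : S) : Prop :=
  exists t, mul s t = one.

Definition maxM {S : Type} (mul : S -> S -> S) (one : S) (s : S) : Prop :=
  forall t, mul s t <> one.

Definition right_ideal {S : Type} (mul : S -> S -> S) (I : S -> Prop) : Prop :=
  (exists s, I s) /\ (forall s t, I s -> I (mul s t)).

Definition left_ideal {S : Type} (mul : S -> S -> S) (I : S -> Prop) : Prop :=
  (exists s, I s) /\ (forall s t, I s -> I (mul t s)).

Definition two_sided_ideal {S : Type} (mul : S -> S -> S) (I : S -> Prop) : Prop :=
  right_ideal mul I /\ left_ideal mul I.

Definition proper_subset {X : Type} (P : X -> Prop) : Prop := exists x, ~ P x.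

Record is_right_act (S A : Type) (mul : S -> S -> S) (one : S)
    (act : A -> S -> A) : Prop := {
  act_one : forall a, act a one = a;
  act_mul : forall a s t, act a (mul s t) = act (act a s) t
}.

Definition subact {S A : Type} (act : A -> S -> A) (B : A -> Prop) : Prop :=
  (exists a, B a) /\ (forall a s, B a -> B (act a s)).

Definition maximal_subact {S A : Type} (act : A -> S -> A) (B : A -> Prop) : Prop :=
  subact act B /\ proper_subset B /\
  forall C : A -> Prop, subact act C -> proper_subset C ->
    (forall a, B a -> C a) -> forall a, C a -> B a.

(* AI = A, i.e. every element of A has the form b s with b in A, s in I. *)
Definition act_set_eq_whole {S A : Type} (act : A -> S -> A) (I : S -> Prop) : Prop :=
  forall a, exists b s, I s /\ act b s = a.

(* Since a is outside the maximal subact B, the subact B ∪ aS must be all of A.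
   Writing a = b s with b ∈ A and s ∈ I, the element b cannot lie in B (else
   a ∈ B), so b = a t and a = a (t s).  A proper right ideal lies in M, and M is
   a left ideal, so t s ∈ M. *)

From Stdlib Require Import Classical.

Section Monoid.

Variables (S : Type) (mul : S -> S -> S) (one : S).
Hypothesis HS : is_monoid S mul one.

Lemma proper_right_ideal_sub_maxM (I : S -> Prop) :
  right_ideal mul I -> proper_subset I -> forall s, I s -> maxM mul one s.
Proof.
  intros [_ HImul] [x Hx] s Hs t Hst.
  apply Hx.
  rewrite <- (mon_left_id _ _ _ HS x), <- Hst, <- (mon_assoc _ _ _ HS).
  apply HImul; exact Hs.
Qed.

Section Act.

Variables (A : Type) (act : A -> S -> A).
Hypothesis HA : is_right_act S A mul one act.

Definition union_cyclic (B : A -> Prop) (a : A) : A -> Prop :=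
  fun x => B x \/ exists t, act a t = x.

Lemma subact_union_cyclic (B : A -> Prop) (a : A) :
  subact act B -> subact act (union_cyclic B a).
Proof.
  intros [_ HBact]. split.
  - exists a. right. exists one. apply (act_one _ _ _ _ _ HA).
  - intros x s [Hx | [t <-]].
    + left. apply HBact; exact Hx.
    + right. exists (mul t s). apply (act_mul _ _ _ _ _ HA).
Qed.

Lemma maximal_subact_union_cyclic_full (B : A -> Prop) (a : A) :
  maximal_subact act B -> ~ B a -> forall x, union_cyclic B a x.
Proof.
  intros [HBsub [_ HBmax]] Ha x.
  apply NNPP. intro Hx.
  apply Ha, (HBmax (union_cyclic B a)).
  - apply subact_union_cyclic; exact HBsub.
  - exists x; exact Hx.
  - intros y Hy; left; exact Hy.
  - right. exists one. apply (act_one _ _ _ _ _ HA).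
Qed.

End Act.

End Monoid.

Theorem corollary2p8 (S : Type) (mul : S -> S -> S) (one : S)
    (HS : is_monoid S mul one)
    (Hnoninv : exists s, ~ right_invertible mul one s)
    (HM : two_sided_ideal mul (maxM mul one))
    (A : Type) (act : A -> S -> A) (HA : is_right_act S A mul one act)
    (B : A -> Prop) (HB : maximal_subact act B)
    (I : S -> Prop) (HI : right_ideal mul I) (HIp : proper_subset I)
    (HAI : act_set_eq_whole act I) :
  forall a, ~ B a -> exists m, maxM mul one m /\ act a m = a.
Proof.
  intros a Ha.
  destruct (HAI a) as [b [s [Hs Hbs]]].
  destruct (maximal_subact_union_cyclic_full _ _ _ _ _ HA B a HB Ha b)
    as [Hb | [t Ht]].
  - exfalso. apply Ha. rewrite <- Hbs.
    apply (proj2 (proj1 HB)); exact Hb.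
  - exists (mul t s). split.
    + apply (proj2 (proj2 HM)).
      apply (proper_right_ideal_sub_maxM _ _ _ HS I HI HIp); exact Hs.
    + rewrite (act_mul _ _ _ _ _ HA). congruence.
Qed.
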